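(* Let $T=\begin{pmatrix}1&1\\0&1\end{pmatrix}\in\mathsf{SL}(2,\mathbb{Z})$. For every integer $k\ge1$, $T^{12k}=\begin{pmatrix}1&12k\\0&1\end{pmatrix}$ can be written as a product of $k+1$ commutators of elements of $\mathsf{SL}(2,\mathbb{Z})$.
   Context: $[X,Y]=XYX^{-1}Y^{-1}$. *)

From HB Require Import structures.
From mathcomp Require Import all_boot all_order all_algebra.
Set Implicit Arguments. Unset Strict Implicit. Unset Printing Implicit Defensive.
Import Order.TTheory GRing.Theory Num.Theory.
Local Open Scope ring_scope.

Definition inSL2Z (A : 'M[int]_2) : Prop := \det A = 1.

Definition commSL (X Y : 'M[int]_2) : 'M[int]_2 :=
  X *m Y *m invmx X *m invmx Y.

Definition Tmat : 'M[int]_2 :=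
  \matrix_(i < 2, j < 2) (if (i <= j)%N then 1 else 0).

From HB Require Import structures.
From mathcomp Require Import all_boot all_order all_algebra.
From mathcomp Require Import ring.
Set Implicit Arguments. Unset Strict Implicit. Unset Printing Implicit Defensive.
Import Order.TTheory GRing.Theory Num.Theory.
Local Open Scope ring_scope.

(* Everything turns on the hyperbolic element P = [[-1,-5],[1,4]], a conjugate
   of [[1,1],[1,2]].  First, T^12 P^-1 is a single commutator [X0, Y0];
   conjugating it by P^i for i < k and multiplying telescopes to T^(12k) P^-k.
   Second, P is both a commutator [L, S] and conjugate to its own inverse by S,
   so every power P^k is one further commutator [P^(k/2) L^(k mod 2), S]. *)

Section UnitRingCommutators.
Variable R : unitRingType.

Definition commr (x y : R) : R := x * y * x^-1 * y^-1.

Lemma invr_conj (g x : R) : g \is a GRing.unit -> x \is a GRing.unit ->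
  (g * x * g^-1)^-1 = g * x^-1 * g^-1.
Proof.
move=> ug ux; have ugx : g * x \is a GRing.unit by rewrite unitrMl.
by rewrite invrM ?unitrV // invrM // invrK mulrA.
Qed.

Lemma exprn_conj (g x : R) n : g \is a GRing.unit ->
  (g * x * g^-1) ^+ n = g * x ^+ n * g^-1.
Proof.
move=> ug; elim: n => [|n IH]; first by rewrite !expr0 mulr1 mulrV.
by rewrite exprS IH !exprS !mulrA mulrVK.
Qed.

Lemma commr_conj (g x y : R) :
  [/\ g \is a GRing.unit, x \is a GRing.unit & y \is a GRing.unit] ->
  commr (g * x * g^-1) (g * y * g^-1) = g * commr x y * g^-1.
Proof. by case=> ug ux uy; rewrite /commr !invr_conj // !mulrA !mulrVK. Qed.

Lemma prod_conj_telescope (t p : R) n : p \is a GRing.unit ->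
  \prod_(i < n) (p ^+ i * (t * p^-1) * (p ^+ i)^-1) = t ^+ n * (p ^+ n)^-1.
Proof.
move=> up; elim: n => [|n IH]; first by rewrite big_ord0 !expr0 invr1 mulr1.
rewrite big_ord_recr /= IH !mulrA mulrVK ?unitrX //.
by rewrite [t ^+ n.+1]exprSr [p ^+ n.+1]exprSr invrM ?unitrX // !mulrA.
Qed.

Lemma prod_conj_commr (x y t p : R) n :
  [/\ x \is a GRing.unit, y \is a GRing.unit & p \is a GRing.unit] ->
  commr x y = t * p^-1 ->
  \prod_(i < n) commr (p ^+ i * x * (p ^+ i)^-1) (p ^+ i * y * (p ^+ i)^-1)
    = t ^+ n * (p ^+ n)^-1.
Proof.
case=> ux uy up cxy; rewrite -prod_conj_telescope //.
by apply: eq_bigr => i _; rewrite commr_conj ?unitrX // cxy.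
Qed.

Section PowersOfSelfInverseCommutator.
Variables b s l : R.
Hypotheses (ub : b \is a GRing.unit) (us : s \is a GRing.unit)
  (ul : l \is a GRing.unit).
Hypotheses (sbVs : s * b^-1 * s^-1 = b) (commr_ls : commr l s = b).

Definition commr_root (n : nat) : R := b ^+ n./2 * (if odd n then l else 1).

(* s inverts b by conjugation, so s b^-m s^-1 = b^m. *)
Lemma commr_exprMl m x : x \is a GRing.unit ->
  commr (b ^+ m * x) s = b ^+ m * commr x s * b ^+ m.
Proof.
move=> ux; have ubm : b ^+ m \is a GRing.unit by rewrite unitrX.
have sbmVs : s * (b ^+ m)^-1 * s^-1 = b ^+ m by rewrite -exprVn -exprn_conj // sbVs.
by rewrite /commr invrM // -[X in _ = _ * X]sbmVs !mulrA mulrVK.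
Qed.

Lemma commr_rootE n : commr (commr_root n) s = b ^+ n.
Proof.
rewrite /commr_root; case: ifP => odd_n.
- rewrite commr_exprMl // commr_ls -exprSr -exprD.
  by rewrite -[in RHS](odd_double_half n) odd_n -addnn addSn.
- rewrite commr_exprMl ?unitr1 // /commr mul1r invr1 mulr1 mulrV // mulr1 -exprD.
  by rewrite -[in RHS](odd_double_half n) odd_n -addnn.
Qed.

End PowersOfSelfInverseCommutator.
End UnitRingCommutators.

Definition mx22 (a b c d : int) : 'M[int]_2 :=
  \matrix_(i < 2, j < 2)
    (if i == 0 then (if j == 0 then a else b) else (if j == 0 then c else d)).

Lemma mx22_mul a b c d a' b' c' d' :
  mx22 a b c d * mx22 a' b' c' d'
    = mx22 (a * a' + b * c') (a * b' + b * d') (c * a' + d * c') (c * b' + d * d').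
Proof.
apply/matrixP => i j; rewrite !mxE !big_ord_recl big_ord0 !mxE.
by case: i => [[|[|//]] ?]; case: j => [[|[|//]] ?]; rewrite /= addr0.
Qed.

Lemma det_mx22 a b c d : \det (mx22 a b c d) = a * d - b * c.
Proof.
rewrite (expand_det_row _ 0) !big_ord_recl big_ord0 /cofactor !det_mx11 !mxE /=.
by rewrite addr0 expr0 mul1r /bump /= expr1 mulN1r mulrN.
Qed.

Lemma mx22_1 : mx22 1 0 0 1 = 1.
Proof.
apply/matrixP => i j; rewrite !mxE.
by case: i => [[|[|//]] ?]; case: j => [[|[|//]] ?].
Qed.

Lemma mx22_unit a b c d : a * d - b * c = 1 -> mx22 a b c d \is a GRing.unit.
Proof. by move=> det1; rewrite unitmxE det_mx22 det1 unitr1. Qed.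

Lemma invr_mx22 a b c d :
  a * d - b * c = 1 -> (mx22 a b c d)^-1 = mx22 d (-b) (-c) a.
Proof.
move=> det1; have inv_r : mx22 a b c d * mx22 d (-b) (-c) a = 1.
  by rewrite mx22_mul -mx22_1 -det1; congr mx22; ring.
by rewrite -[LHS]mulr1 -inv_r mulrA mulVr ?mx22_unit // mul1r.
Qed.

Lemma Tmat_exprn n : Tmat ^+ n = mx22 1 n%:R 0 1.
Proof.
have -> : Tmat = mx22 1 1 0 1.
  apply/matrixP => i j; rewrite !mxE.
  by case: i => [[|[|//]] ?]; case: j => [[|[|//]] ?].
elim: n => [|n IH]; first by rewrite expr0 mx22_1.
by rewrite exprS IH mx22_mul; congr mx22; rewrite ?natrS; ring.
Qed.

Lemma det_conj (g x : 'M[int]_2) : g \is a GRing.unit ->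
  \det (g * x * g^-1) = \det x.
Proof.
move=> ug; have udg : \det g \is a GRing.unit by rewrite -unitmxE.
by rewrite !detM [g^-1]/(invmx g) det_inv mulrAC mulrV ?mul1r.
Qed.

Lemma det_exprn (x : 'M[int]_2) n : \det x = 1 -> \det (x ^+ n) = 1.
Proof.
move=> detx; elim: n => [|n IH]; first by rewrite expr0 det1.
by rewrite exprS detM detx IH mulr1.
Qed.

Definition Pmx : 'M[int]_2 := mx22 (-1) (-5) 1 4.
Definition X0mx : 'M[int]_2 := mx22 (-3) (-1) (-2) (-1).
Definition Y0mx : 'M[int]_2 := mx22 (-2) 1 3 (-2).
Definition Smx : 'M[int]_2 := mx22 (-2) (-5) 1 2.
Definition Lmx : 'M[int]_2 := mx22 (-1) (-4) 1 3.

Lemma Pmx_unit : Pmx \is a GRing.unit. Proof. exact: mx22_unit. Qed.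
Lemma Smx_unit : Smx \is a GRing.unit. Proof. exact: mx22_unit. Qed.
Lemma Lmx_unit : Lmx \is a GRing.unit. Proof. exact: mx22_unit. Qed.
Lemma X0mx_unit : X0mx \is a GRing.unit. Proof. exact: mx22_unit. Qed.
Lemma Y0mx_unit : Y0mx \is a GRing.unit. Proof. exact: mx22_unit. Qed.

Lemma commr_X0mx_Y0mx : commr X0mx Y0mx = Tmat ^+ 12 * Pmx^-1.
Proof. by rewrite /commr Tmat_exprn !invr_mx22 // !mx22_mul; congr mx22; ring. Qed.

Lemma Smx_invPmx : Smx * Pmx^-1 * Smx^-1 = Pmx.
Proof. by rewrite !invr_mx22 // !mx22_mul; congr mx22; ring. Qed.

Lemma commr_Lmx_Smx : commr Lmx Smx = Pmx.
Proof. by rewrite /commr !invr_mx22 // !mx22_mul; congr mx22; ring. Qed.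

Definition Xmx (k i : nat) : 'M[int]_2 :=
  if (i < k)%N then Pmx ^+ i * X0mx * (Pmx ^+ i)^-1 else commr_root Pmx Lmx k.

Definition Ymx (k i : nat) : 'M[int]_2 :=
  if (i < k)%N then Pmx ^+ i * Y0mx * (Pmx ^+ i)^-1 else Smx.

Lemma Xmx_Ymx_SL2Z k i : inSL2Z (Xmx k i) /\ inSL2Z (Ymx k i).
Proof.
rewrite /inSL2Z /Xmx /Ymx; case: ifP => _.
  by rewrite !det_conj ?unitrX ?Pmx_unit // !det_mx22.
rewrite det_mx22; split=> //.
by rewrite detM det_exprn ?det_mx22 //; case: ifP => _; rewrite ?det_mx22 ?det1.
Qed.

Lemma prod_commr_Xmx_Ymx k :
  \prod_(i < k.+1) commr (Xmx k i) (Ymx k i) = Tmat ^+ (12 * k).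
Proof.
rewrite big_ord_recr /= /Xmx /Ymx ltnn.
rewrite (eq_bigr (fun i : 'I_k => commr (Pmx ^+ i * X0mx * (Pmx ^+ i)^-1)
                                        (Pmx ^+ i * Y0mx * (Pmx ^+ i)^-1)));
  last by move=> i _; rewrite ltn_ord.
rewrite (prod_conj_commr _ _ commr_X0mx_Y0mx); last first.
  by split; [exact: X0mx_unit | exact: Y0mx_unit | exact: Pmx_unit].
rewrite (commr_rootE Pmx_unit Smx_unit Lmx_unit Smx_invPmx commr_Lmx_Smx).
by rewrite mulrVK ?unitrX ?Pmx_unit // exprM.
Qed.

Theorem mainTheorem10 (k : nat) (hk : (1 <= k)%N) :
  Tmat ^+ (12 * k) =
    \matrix_(i < 2, j < 2)
      (if i == j then 1 else if ((i == 0 :> nat) && (j == 1 :> nat))%N then (12 * k)%:R else 0)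
  /\
  exists X Y : 'I_k.+1 -> 'M[int]_2,
    (forall i, inSL2Z (X i) /\ inSL2Z (Y i)) /\
    \prod_(i < k.+1) commSL (X i) (Y i) = Tmat ^+ (12 * k).
Proof.
split.
  rewrite Tmat_exprn; apply/matrixP => i j; rewrite !mxE.
  by case: i => [[|[|//]] ?]; case: j => [[|[|//]] ?].
exists (fun i => Xmx k i), (fun i => Ymx k i); split.
  by move=> i; apply: Xmx_Ymx_SL2Z.
exact: prod_commr_Xmx_Ymx.
Qed.
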